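(* Suppose the rows of $\tilde{\mathbf Z}^\star$ can be represented in a $d_0$-dimensional Fourier basis, i.e. $\mathbf F^\star$ has at most $d_0$ nonzero columns. Then $d=\operatorname{rank}(\mathbf R^\star)\le 2d_0$, and there exists $\tilde{\mathbf W}\in\mathbb O_T$ such that $$\begin{bmatrix}\operatorname{ASE}(\mathbf R^\star,d) & \mathbf 0\end{bmatrix}=\frac1{\sqrt T}\mathbf F^\star\mathbf K^{1/2}\tilde{\mathbf W},$$ where $\mathbf 0$ is the $n\times(T-d)$ zero matrix.
   Context: Let $\mathbf Z^\star\in\mathbb R^{n\times T}$ have rows $\mathbf Z^\star_i$ with $\sigma^{\star2}_i=\frac1T\|\mathbf M\mathbf Z^\star_i\|^2>0$, where $\mathbf M=\mathbf I-\frac1T\mathbf J$ is the centering projection ($\mathbf J$ all-ones). Let $\boldsymbol\Sigma^\star=\operatorname{diag}(\sigma^{\star2}_1,\dots,\sigma^{\star2}_n)$, $\tilde{\mathbf Z}^\star=\frac1{\sqrt T}(\boldsymbol\Sigma^\star)^{-1/2}\mathbf Z^\star\mathbf M$, and $\mathbf R^\star=\tilde{\mathbf Z}^\star\tilde{\mathbf Z}^{\star\top}$ (the correlation matrix of the rows of $\mathbf Z^\star$). Let $\mathbf F^\star\in\mathbb C^{n\times T}$ have entries $F^\star_{i,k}=\sum_{t=1}^T\tilde Z^\star_{i,t}\exp\{-2\pi\mathrm i(k-1)(t-1)/T\}$. Let $\mathbf K\in\mathbb R^{T\times T}$ be the permutation matrix with $K_{s,t}=1$ if $s=t=1$ or $s+t=T+2$,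 and $0$ otherwise; with $\mathbf P_\pm$ the orthogonal projections onto its $\pm1$ eigenspaces, $\mathbf K^{1/2}=\mathbf P_++\mathrm i\,\mathbf P_-$. For a symmetric $\mathbf A\in\mathbb R^{n\times n}$, $\operatorname{ASE}(\mathbf A,d)=\mathbf V|\mathbf D|^{1/2}$, where $\mathbf D$ is the diagonal matrix of the $d$ largest-magnitude eigenvalues of $\mathbf A$ and $\mathbf V\in\mathbb R^{n\times d}$ holds corresponding orthonormal eigenvectors. $\mathbb O_T$ denotes the $T\times T$ orthogonal matrices. *)

From HB Require Import structures.
From mathcomp Require Import all_boot all_order all_algebra.
From mathcomp Require Import complex.
From mathcomp Require Import reals trigo.
Set Implicit Arguments. Unset Strict Implicit. Unset Printing Implicit Defensive.
Import Order.TTheory GRing.Theory Num.Theory.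
Local Open Scope ring_scope.

Section Defs.
Variable R : realType.
Local Notation C := (complex R).

Definition RtoC (x : R) : C := Complex x 0.
Definition iC : C := Complex 0 1.

Definition centerM (T : nat) : 'M[R]_T := 1%:M - (T%:R)^-1 *: const_mx 1.

Definition sigma2 (n T : nat) (Z : 'M[R]_(n, T)) (i : 'I_n) : R :=
  (T%:R)^-1 * \sum_(t < T) ((Z *m centerM T) i t) ^+ 2.

Definition Ztilde (n T : nat) (Z : 'M[R]_(n, T)) : 'M[R]_(n, T) :=
  \matrix_(i, t) ((Num.sqrt (T%:R))^-1 * (Num.sqrt (sigma2 Z i))^-1
                   * (Z *m centerM T) i t).

Definition Rstar (n T : nat) (Z : 'M[R]_(n, T)) : 'M[R]_n :=
  Ztilde Z *m (Ztilde Z)^T.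

(* exp{-2 pi i k t / T} with 0-based indices k = k'-1, t = t'-1 *)
Definition dft_root (T k t : nat) : C :=
  let th := 2 * pi * (k%:R * t%:R) / T%:R in Complex (cos th) (- sin th).

Definition Fstar (n T : nat) (Z : 'M[R]_(n, T)) : 'M[C]_(n, T) :=
  \matrix_(i, k) \sum_(t < T) RtoC (Ztilde Z i t) * dft_root T k t.

(* K_{s,t} = 1 iff s = t = 1 or s + t = T + 2 (1-based); 0-based:
   s = t = 0 or s + t = T *)
Definition Kperm (T : nat) : 'M[R]_T :=
  \matrix_(s, t) (if ((s == 0%N :> nat) && (t == 0%N :> nat)) || (s + t == T)%N
                  then 1 else 0).

(* orthogonal projections onto the +1 / -1 eigenspaces of the symmetric
   involution K *)
Definition Pplus (T : nat) : 'M[R]_T := 2^-1 *: (1%:M + Kperm T).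
Definition Pminus (T : nat) : 'M[R]_T := 2^-1 *: (1%:M - Kperm T).

Definition Khalf (T : nat) : 'M[C]_T :=
  map_mx RtoC (Pplus T) + iC *: map_mx RtoC (Pminus T).

(* Encoded through a full spectral
   decomposition A = U diag(e) U^T (U orthogonal), eigenvalues sorted by
   nonincreasing magnitude, V = first d columns of U, D = first d entries of e. *)
Definition is_ASE (n : nat) (A : 'M[R]_n) (d : nat) (X : 'M[R]_(n, d)) : Prop :=
  (d <= n)%N /\
  exists (U : 'M[R]_n) (e : 'rV[R]_n),
    U^T *m U = 1%:M /\
    A = U *m diag_mx e *m U^T /\
    (forall i j : 'I_n, (i <= j)%N -> `|e 0 j| <= `|e 0 i|) /\
    (forall (i : 'I_n) (k : 'I_d),
       X i k = match @insub nat (fun m => (m < n)%N) _ (val k) with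
               | Some j => U i j * Num.sqrt `|e 0 j|
               | None => 0
               end).

Definition padcols (n d T : nat) (X : 'M[R]_(n, d)) : 'M[R]_(n, T) :=
  \matrix_(i, j) match @insub nat (fun m => (m < d)%N) _ (val j) with
                 | Some k => X i k
                 | None => 0
                 end.

End Defs.

(* With theta_{tk} = 2 pi k t / T, the Hartley matrix H = (cos theta_{tk} + sin theta_{tk})
   satisfies H H^T = T I.  The permutation K sends the frequency k to -k, so it fixes the
   cosine part and negates the sine part of the DFT matrix Omega = (cos - i sin); hence
   Omega K^{1/2} = Omega (P_+ + i P_-) = H, i.e. F* K^{1/2} / sqrt T = Ztilde Q with Q = H / sqrt T
   orthogonal, and R* = (Ztilde Q) (Ztilde Q)^T.  A zero column of F* is a zero column of
   Ztilde H, which bounds the rank by d0.  Finally, for an ASE X of a Gram matrix B B^T, the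
   spectral decomposition B B^T = U diag(e) U^T writes B = X V with V having orthonormal rows;
   completing V to an orthogonal W^T gives B W = [X 0]. *)

From HB Require Import structures.
From mathcomp Require Import all_boot all_order all_algebra.
From mathcomp Require Import complex.
From mathcomp Require Import reals trigo.
From mathcomp Require Import ring lra zify.
Import Order.TTheory GRing.Theory Num.Theory.
Local Open Scope ring_scope.
Set Implicit Arguments. Unset Strict Implicit. Unset Printing Implicit Defensive.

Section SortedDiagonal.
Variable F : numFieldType.

Lemma rank_diag_mx_le n (e : 'rV[F]_n) r :
  (forall j : 'I_n, (r <= j)%N -> e 0 j = 0) -> (\rank (diag_mx e) <= r)%N.
Proof.
move=> e0; have [le_nr|lt_rn] := leqP n r; first exact: leq_trans (rank_leq_row _) le_nr.
have -> : diag_mx e = diag_mx e *m pid_mx r.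
  apply/matrixP => i j; rewrite mul_diag_mx !mxE.
  rewrite (inj_eq val_inj); have [->|_] := eqVneq i j; last by rewrite mulr0.
  by case: (ltnP j r) => [_|/e0 ->]; rewrite /= ?mulr1 ?mul0r.
by rewrite (leq_trans (mxrankM_maxr _ _)) // rank_pid_mx // ltnW.
Qed.

Lemma rank_diag_mx_gt n (e : 'rV[F]_n) (r : 'I_n) :
  (forall j : 'I_n, (j <= r)%N -> e 0 j != 0) -> (r < \rank (diag_mx e))%N.
Proof.
move=> e0; pose f := \row_(j < n) (if (j <= r)%N then (e 0 j)^-1 else 0).
have pid_diag : pid_mx r.+1 = diag_mx e *m diag_mx f :> 'M_n.
  apply/matrixP => i j; rewrite mul_diag_mx !mxE ltnS (inj_eq val_inj).
  have [->|_] := eqVneq i j; last by rewrite mulr0.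
  by case: (leqP j r) => [jr|_]; rewrite ?mulfV ?e0 ?mulr0.
by rewrite -[r.+1](@rank_pid_mx F n n) ?pid_diag ?mxrankM_maxl.
Qed.

Lemma sorted_diag_mx_support n (e : 'rV[F]_n) :
  (forall i j : 'I_n, (i <= j)%N -> `|e 0 j| <= `|e 0 i|) ->
  forall j : 'I_n, (e 0 j != 0) = (j < \rank (diag_mx e))%N.
Proof.
move=> sorted_e j; apply/idP/idP => [ej0|].
  apply: rank_diag_mx_gt => i le_ij.
  by rewrite -normr_gt0 (lt_le_trans _ (sorted_e _ _ le_ij)) ?normr_gt0.
apply: contraTT => /negPn/eqP ej0; rewrite -leqNgt; apply: rank_diag_mx_le => i le_ji.
by apply/eqP; rewrite -normr_le0 -(normr0 F) -ej0 sorted_e.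
Qed.
End SortedDiagonal.

Section RealGram.
Variable R : realFieldType.

Lemma mul_row_tr_ge0 n (r : 'rV[R]_n) : 0 <= (r *m r^T) 0 0.
Proof. by rewrite mxE sumr_ge0 // => j _; rewrite mxE -expr2 sqr_ge0. Qed.

Lemma mul_row_tr_eq0 n (r : 'rV[R]_n) : ((r *m r^T) 0 0 == 0) = (r == 0).
Proof.
apply/idP/eqP => [|->]; last by rewrite mul0mx mxE.
rewrite mxE psumr_eq0 => [/allP r0|j _]; last by rewrite mxE -expr2 sqr_ge0.
apply/rowP => j; rewrite mxE; apply/eqP.
by have := r0 j (mem_index_enum _); rewrite mxE -expr2 sqrf_eq0.
Qed.

Lemma gram_diag_support n T (G : 'M[R]_(n, T)) (e : 'rV[R]_n) :
  G *m G^T = diag_mx e ->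
  (forall i j : 'I_n, (i <= j)%N -> `|e 0 j| <= `|e 0 i|) ->
  (forall j : 'I_n, (j < \rank (diag_mx e))%N -> 0 < e 0 j) /\
  (forall j : 'I_n, (\rank (diag_mx e) <= j)%N -> row j G = 0).
Proof.
move=> GG sorted_e.
have eG j : e 0 j = (row j G *m (row j G)^T) 0 0.
  have := congr1 (fun M : 'M_n => M j j) GG; rewrite !mxE eqxx mulr1n => <-.
  by apply: eq_bigr => t _; rewrite !mxE.
have supp_e := sorted_diag_mx_support sorted_e.
split=> j; first by rewrite lt_def supp_e eG mul_row_tr_ge0 => ->.
by rewrite leqNgt -supp_e negbK eG mul_row_tr_eq0 => /eqP.
Qed.

End RealGram.

Lemma mxrank_le_nonzero_cols (F : fieldType) m n (B : 'M[F]_(m, n)) :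
  (\rank B <= #|[set k | col k B != 0%R]|)%N.
Proof.
set S := [set k | col k B != 0%R].
pose BS : 'M[F]_(m, #|S|) := \matrix_(i, j) B i (enum_val j).
pose E : 'M[F]_(#|S|, n) := \matrix_(j, k) (enum_val j == k)%:R.
have -> : B = BS *m E.
  apply/matrixP => i k; rewrite !mxE; under eq_bigr do rewrite !mxE.
  rewrite -(big_enum_val (fun x => B i x * (x == k)%:R)) /=.
  have [kS|kNS] := boolP (k \in S).
    rewrite (bigD1 k) //= eqxx mulr1 big1 ?addr0 // => x /andP[_ xk].
    by rewrite (negPf xk) mulr0.
  have /eqP/colP/(_ i) : col k B == 0 by move: kNS; rewrite inE negbK.
  rewrite !mxE => ->; rewrite big1 // => x xS.
  by rewrite (_ : (x == k) = false) ?mulr0 //; apply: contraNF kNS => /eqP <-.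
exact: leq_trans (mxrankM_maxr _ _) (rank_leq_row _).
Qed.

Section OrthonormalCompletion.
Variable R : rcfType.

Lemma unit_row_orthogonal m n (V : 'M[R]_(m, n)) : (m < n)%N ->
  exists w : 'rV[R]_n, w *m w^T = 1%:M /\ V *m w^T = 0.
Proof.
move=> lt_mn.
have : kermx V^T != 0.
  rewrite -mxrank_eq0 mxrank_ker mxrank_tr -lt0n subn_gt0.
  exact: leq_ltn_trans (rank_leq_row V) lt_mn.
case/rowV0Pn => v /sub_kermxP vV0 v0.
set s := (v *m v^T) 0 0.
have s_gt0 : 0 < s by rewrite lt_def mul_row_tr_eq0 v0 mul_row_tr_ge0.
exists ((Num.sqrt s)^-1 *: v); split.
  rewrite linearZ /= -scalemxAl -scalemxAr scalerA -expr2 exprVn sqr_sqrtr ?ltW //.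
  by rewrite [v *m _]mx11_scalar scale_scalar_mx mulVf ?gt_eqF.
by rewrite linearZ /= -scalemxAr -[V]trmxK -trmx_mul vV0 trmx0 scaler0.
Qed.

Lemma orthonormal_completion m n (V : 'M[R]_(m, n)) : V *m V^T = 1%:M ->
  exists W : 'M[R]_n, W^T *m W = 1%:M /\ V *m W = pid_mx m.
Proof.
move=> VV; have le_mn : (m <= n)%N.
  by rewrite -[m](@mxrank1 R m) -VV (leq_trans (mxrankM_maxl _ _)) ?rank_leq_col.
move: {2}(n - m)%N (erefl (n - m)%N) => k; elim: k m V VV le_mn => [|k IHk] m V VV le_mn.
  move/eqP; rewrite subn_eq0 => le_nm; have /eqP mn : m == n by rewrite eqn_leq le_mn.
  by subst m; exists V^T; rewrite trmxK VV pid_mx_1.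
move=> nmk; have [|w [ww Vw]] := @unit_row_orthogonal m n V; first by rewrite -subn_gt0 nmk.
have VwVw : col_mx V w *m (col_mx V w)^T = 1%:M.
  rewrite tr_col_mx mul_col_row VV ww Vw -[w *m V^T]trmxK trmx_mul trmxK Vw trmx0.
  by rewrite -scalar_mx_block.
have [||W [WW VwW]] := IHk _ _ VwVw.
- by rewrite addn1 -subn_gt0 nmk.
- by rewrite addn1 subnS nmk.
exists W; split => //; rewrite -[V](col_mxKu V w) mul_usub_mx VwW.
by apply/matrixP => i j; rewrite !mxE /= ltn_ord addn1 ltnS ltnW.
Qed.

End OrthonormalCompletion.

Section GramASE.
Variable R : realType.

Lemma padcols_pid n d T (X : 'M[R]_(n, d)) : padcols T X = X *m pid_mx d.
Proof.
apply/matrixP => i j; rewrite !mxE.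
case: insubP => [k jd jk|]; last first.
  rewrite -leqNgt => le_dj; rewrite big1 // => k _; rewrite mxE.
  by rewrite (ltn_eqF (leq_trans (ltn_ord k) le_dj)) mulr0.
rewrite (bigD1 k) //= mxE jk eqxx jd mulr1 big1 ?addr0 // => l lk.
by move: lk; rewrite mxE -jk -(inj_eq val_inj) => /negPf ->; rewrite mulr0.
Qed.

Lemma ASE_gram_factor n T (A : 'M[R]_n) (B : 'M[R]_(n, T)) (X : 'M[R]_(n, \rank A)) :
  A = B *m B^T -> is_ASE A X ->
  exists V : 'M[R]_(\rank A, T), V *m V^T = 1%:M /\ B = X *m V.
Proof.
move=> AB [le_dn [U [e [UU [AU [sorted_e Xe]]]]]].
set d := \rank A in X le_dn Xe *.
pose G := U^T *m B.
have GG : G *m G^T = diag_mx e.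
  by rewrite trmx_mul trmxK !mulmxA -(mulmxA _ B) -AB AU !mulmxA UU mul1mx -mulmxA UU mulmx1.
have rank_e : \rank (diag_mx e) = d.
  have rank_sandwich (P M Q : 'M[R]_n) : (\rank (P *m M *m Q) <= \rank M)%N.
    exact: leq_trans (mxrankM_maxl _ _) (mxrankM_maxr _ _).
  have diagE : diag_mx e = U^T *m A *m U.
    by rewrite -GG trmx_mul trmxK mulmxA -(mulmxA _ B) -AB.
  by apply/eqP; rewrite eqn_leq {1}diagE /d {3}AU !rank_sandwich.
have [e_gt0 G0] := gram_diag_support GG sorted_e; rewrite rank_e in e_gt0 G0.
(* The rows of G = U^T B are orthogonal with squared norms e; V normalizes the nonzero ones. *)
pose wd := widen_ord le_dn.
pose V := \matrix_(k, t) ((Num.sqrt (e 0 (wd k)))^-1 * G (wd k) t).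
have ewd_gt0 (k : 'I_d) : 0 < e 0 (wd k) := e_gt0 (wd k) (ltn_ord k).
have Xk i (k : 'I_d) : X i k = U i (wd k) * Num.sqrt (e 0 (wd k)).
  by rewrite Xe -[val k]/(val (wd k)) valK ger0_norm // ltW.
exists V; split.
  apply/matrixP => k l; rewrite !mxE.
  transitivity ((Num.sqrt (e 0 (wd k)))^-1 * (Num.sqrt (e 0 (wd l)))^-1 *
                (G *m G^T) (wd k) (wd l)).
    by rewrite mxE mulr_sumr; apply: eq_bigr => t _; rewrite !mxE; ring.
  rewrite GG !mxE (_ : wd k == wd l = (k == l)) -?(inj_eq val_inj) //.
  case: eqP => [/val_inj <-|_]; last by rewrite /= mulr0n mulr0.
  by rewrite mulr1n -invfM -expr2 sqr_sqrtr ?ltW // mulVf ?gt_eqF.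
have B_UG : B = U *m G by rewrite mulmxA mulmx1C ?mul1mx.
apply/matrixP => i t; rewrite {1}B_UG !mxE (bigID (fun j : 'I_n => (j < d)%N)) /=.
rewrite [X in _ + X]big1 ?addr0 => [|j]; last first.
  by rewrite -leqNgt => /G0/rowP/(_ t); rewrite !mxE => ->; rewrite mulr0.
rewrite (big_ord_narrow le_dn); apply: eq_bigr => k _; rewrite Xk !mxE.
by rewrite -mulrA mulVKf // gt_eqF // sqrtr_gt0.
Qed.
End GramASE.

Lemma sum_exprs_unity_root (F : idomainType) (z : F) T :
  z ^+ T = 1 -> z != 1 -> \sum_(t < T) z ^+ t = 0.
Proof.
move=> zT z1; have := subrX1 z T; rewrite zT subrr => /esym/eqP.
by rewrite mulf_eq0 subr_eq0 (negPf z1) => /eqP.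
Qed.

Section Fourier.
Variable R : realType.
Local Notation C := (complex R).

Definition cis (x : R) : C := Complex (cos x) (sin x).

Lemma cisD x y : cis (x + y) = cis x * cis y.
Proof. by rewrite /cis cosD sinD; apply/eqP; rewrite eq_complex /= !eqxx /= addrC. Qed.

Lemma cisX x t : cis x ^+ t = cis (t%:R * x).
Proof.
elim: t => [|t IHt]; first by rewrite mul0r /cis cos0 sin0.
by rewrite exprSr IHt -cisD -[t.+1]addn1 natrD mulrDl mul1r.
Qed.

Lemma cis_periodic x k : cis (x + k%:R * (pi *+ 2)) = cis x.
Proof. by rewrite mulr_natl /cis (periodicn (@cosD2pi R)) (periodicn (@sinD2pi R)). Qed.

Lemma cis_neq1 x : 0 < x < pi *+ 2 -> cis x != 1.
Proof.
case/andP=> x_gt0 x_lt2pi; rewrite eq_complex /= negb_and.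
case: (ltgtP x pi) => [x_ltpi|pi_ltx|->].
- by rewrite orbC gt_eqF // sin_gt0_pi // x_gt0 x_ltpi.
- have : 0 < sin (x - pi).
    by apply: sin_gt0_pi; rewrite subr_gt0 pi_ltx /= ltrBlDr -mulr2n.
  by rewrite orbC -{2}(subrK pi x) sinDpi oppr_eq0 => /gt_eqF ->.
- by rewrite cospi -subr_eq0 -opprD oppr_eq0 (_ : 1 + 1 = 2%:R) // pnatr_eq0.
Qed.

Lemma sum_Complex (I : finType) (f g : I -> R) :
  \sum_i Complex (f i) (g i) = Complex (\sum_i f i) (\sum_i g i) :> C.
Proof. by apply: (big_rec3 (fun (a : C) b c => a = Complex b c)) => // i x y z _ ->. Qed.

Definition fourier_angle (T k t : nat) : R := 2 * pi * (k%:R * t%:R) / T%:R.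

Lemma fourier_angleC T k t : fourier_angle T k t = fourier_angle T t k.
Proof. by rewrite /fourier_angle [k%:R * _]mulrC. Qed.

Lemma sum_cis_fourier T m : (0 < T)%N ->
  \sum_(t < T) cis (fourier_angle T m t) = if (T %| m)%N then T%:R else 0.
Proof.
move=> T_gt0; have T0 : (T%:R : R) != 0 by rewrite pnatr_eq0 -lt0n.
pose p : R := 2 * pi * m%:R / T%:R.
have angleE t : fourier_angle T m t = t%:R * p by rewrite /fourier_angle /p; field.
under eq_bigr do rewrite angleE -cisX.
case: ifP => [/dvdnP [q mq]|mT].
  have -> : p = 0 + q%:R * (pi *+ 2) by rewrite /p mq natrM; field.
  rewrite cis_periodic /cis cos0 sin0 (eq_bigr (fun=> 1)) ?sumr_const ?card_ord //.
  by move=> t _; rewrite expr1n.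
apply: sum_exprs_unity_root.
  by rewrite cisX (_ : T%:R * p = 0 + m%:R * (pi *+ 2)) ?cis_periodic /cis ?cos0 ?sin0 // /p; field.
have mT_gt0 : (0 < m %% T)%N by rewrite lt0n; apply: contraFN mT => /eqP; rewrite /dvdn => ->.
rewrite (_ : p = 2 * pi * (m %% T)%:R / T%:R + (m %/ T)%:R * (pi *+ 2)); last first.
  by rewrite /p {1}(divn_eq m T) natrD natrM; field.
rewrite cis_periodic cis_neq1 // !mulr_gt0 ?invr_gt0 ?ltr0n ?pi_gt0 //=.
rewrite ltr_pdivrMr ?ltr0n // mulr2n; have := pi_gt0 R; have := ltn_pmod m T_gt0.
by rewrite -(ltr_nat R); nra.
Qed.

Lemma Complex_natr k : (k%:R : C) = Complex k%:R 0.
Proof. by rewrite -(rmorph_nat (real_complex R)). Qed.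

Lemma sum_cos_fourier T m : (0 < T)%N ->
  \sum_(t < T) cos (fourier_angle T m t) = if (T %| m)%N then T%:R else 0.
Proof.
by move=> /(sum_cis_fourier m); rewrite sum_Complex; case: ifP; rewrite ?Complex_natr => _ [].
Qed.

Lemma sum_sin_fourier T m : (0 < T)%N -> \sum_(t < T) sin (fourier_angle T m t) = 0.
Proof.
by move=> /(sum_cis_fourier m); rewrite sum_Complex; case: ifP; rewrite ?Complex_natr => _ [].
Qed.

End Fourier.

Section Hartley.
Variable R : realType.
Local Notation C := (complex R).

Definition dft_mx T : 'M[C]_T := \matrix_(t, k) dft_root R T k t.
Definition dft_cos T : 'M[R]_T := \matrix_(t, k) cos (fourier_angle R T k t).
Definition dft_sin T : 'M[R]_T := \matrix_(t, k) sin (fourier_angle R T k t).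
Definition cas_mx T : 'M[R]_T := dft_cos T + dft_sin T.
Definition hartley_mx T : 'M[R]_T := (Num.sqrt T%:R)^-1 *: cas_mx T.

Lemma cas_mx_mul_tr T : cas_mx T *m (cas_mx T)^T = T%:R%:M.
Proof.
have [->|T_gt0] := posnP T; first by apply/matrixP => [[]].
have T0 : (T%:R : R) != 0 by rewrite pnatr_eq0 -lt0n.
apply/matrixP => a b; rewrite !mxE.
(* cas x cas y = cos (x - y) + sin (x + y); the frequency a + T - b avoids truncated
   subtraction and shifts the angle by a multiple of 2 pi. *)
have cas_prod (t : 'I_T) : cas_mx T a t * (cas_mx T)^T t b =
    cos (fourier_angle R T (a + T - b) t) + sin (fourier_angle R T (a + b) t).
  rewrite !mxE [fourier_angle _ _ t a]fourier_angleC [fourier_angle _ _ t b]fourier_angleC.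
  have -> : fourier_angle R T (a + T - b) t =
            fourier_angle R T a t - fourier_angle R T b t + t%:R * (pi *+ 2).
    rewrite /fourier_angle natrB ?natrD; last by rewrite ltnW // ltn_addl.
    by field.
  have -> : fourier_angle R T (a + b) t = fourier_angle R T a t + fourier_angle R T b t.
    by rewrite /fourier_angle natrD; field.
  by rewrite mulr_natl (periodicn (@cosD2pi R)) cosB sinD; ring.
under eq_bigr do rewrite cas_prod.
rewrite big_split /= sum_cos_fourier // sum_sin_fourier // addr0.
have [<-|ab] := eqVneq a b; first by rewrite addKn dvdnn mulr1n.
rewrite mulr0n ifF //; apply/negP => /dvdnP [q hq].
have := ltn_ord a; have := ltn_ord b; have : (a : nat) != b by rewrite (inj_eq val_inj).
by case: q hq => [|[|q]] hq; lia.
Qed.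

Lemma dft_mul_entry m T (Y : 'M[R]_(m, T)) i k :
  (map_mx (@RtoC R) Y *m dft_mx T) i k =
  Complex ((Y *m dft_cos T) i k) (- (Y *m dft_sin T) i k).
Proof.
rewrite !mxE -sumrN -sum_Complex; apply: eq_bigr => t _.
by rewrite !mxE /RtoC /dft_root; apply/eqP; rewrite eq_complex /= !mul0r subr0 addr0 mulrN !eqxx.
Qed.

Lemma hartley_mx_orthogonal T : hartley_mx T *m (hartley_mx T)^T = 1%:M.
Proof.
have [->|T_gt0] := posnP T; first by apply/matrixP => [[]].
rewrite /hartley_mx linearZ /= -scalemxAl -scalemxAr scalerA cas_mx_mul_tr scale_scalar_mx.
by rewrite -expr2 exprVn sqr_sqrtr ?ler0n // mulVf // pnatr_eq0 -lt0n.
Qed.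
End Hartley.

Section Reflection.
Variable R : realType.

Definition ord_opp T (k : 'I_T) : 'I_T :=
  Ordinal (ltn_pmod (T - k) (leq_ltn_trans (leq0n k) (ltn_ord k))).

Lemma Kperm_ord_opp T (s k : 'I_T) : Kperm R T s k = if s == ord_opp k then 1 else 0.
Proof.
rewrite mxE -(inj_eq val_inj) /=; congr (if _ then _ else _).
have := ltn_ord s; have := ltn_ord k; case: (posnP k) => [->|k_gt0] lt_kT lt_sT.
  by rewrite subn0 modnn addn0 andbT (ltn_eqF lt_sT) orbF.
by rewrite modn_small ?andbF /=; apply/eqP/eqP; lia.
Qed.

Lemma mulmx_Kperm m T (M : 'M[R]_(m, T)) :
  M *m Kperm R T = \matrix_(i, k) M i (ord_opp k).
Proof.
apply/matrixP => i k; rewrite !mxE (bigD1 (ord_opp k)) //= Kperm_ord_opp eqxx mulr1.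
by rewrite big1 ?addr0 // => s sk; rewrite Kperm_ord_opp (negPf sk) mulr0.
Qed.

Lemma cis_fourier_opp T (k : 'I_T) t :
  cis (fourier_angle R T (ord_opp k) t) = cis (- fourier_angle R T k t).
Proof.
have lt_kT := ltn_ord k; case: (posnP k) => [k0|k_gt0].
  by rewrite /fourier_angle /= k0 subn0 modnn !mul0r mulr0 mul0r oppr0.
have T_gt0 : (0 < T)%N := leq_ltn_trans (leq0n _) lt_kT.
have T0 : (T%:R : R) != 0 by rewrite pnatr_eq0 -lt0n.
rewrite -[RHS](cis_periodic _ t) /fourier_angle /= modn_small ?ltn_subrL ?k_gt0 //.
by rewrite natrB ?(ltnW lt_kT) //; congr cis; field.
Qed.

Lemma dft_cos_Kperm T : dft_cos R T *m Kperm R T = dft_cos R T.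
Proof.
apply/matrixP => t k; rewrite mulmx_Kperm !mxE.
by case: (cis_fourier_opp k t) => -> _; rewrite cosN.
Qed.

Lemma dft_sin_Kperm T : dft_sin R T *m Kperm R T = - dft_sin R T.
Proof.
apply/matrixP => t k; rewrite mulmx_Kperm !mxE.
by case: (cis_fourier_opp k t) => _ ->; rewrite sinN.
Qed.

Lemma dft_Khalf T : dft_mx R T *m Khalf R T = map_mx (@RtoC R) (cas_mx R T).
Proof.
have halfD (A : 'M[R]_T) : 2^-1 *: (A + A) = A.
  by rewrite -mulr2n -scaler_nat scalerA mulVf ?scale1r ?pnatr_eq0.
have cosP : dft_cos R T *m Pplus R T = dft_cos R T.
  by rewrite -scalemxAr mulmxDr mulmx1 dft_cos_Kperm halfD.
have cosM : dft_cos R T *m Pminus R T = 0.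
  by rewrite -scalemxAr mulmxBr mulmx1 dft_cos_Kperm subrr scaler0.
have sinP : dft_sin R T *m Pplus R T = 0.
  by rewrite -scalemxAr mulmxDr mulmx1 dft_sin_Kperm subrr scaler0.
have sinM : dft_sin R T *m Pminus R T = dft_sin R T.
  by rewrite -scalemxAr mulmxBr mulmx1 dft_sin_Kperm opprK halfD.
apply/matrixP => t k.
transitivity (Complex ((dft_cos R T *m Pplus R T + dft_sin R T *m Pminus R T) t k)
                      ((dft_cos R T *m Pminus R T - dft_sin R T *m Pplus R T) t k)).
  rewrite !mxE -!big_split -sumrB -sum_Complex; apply: eq_bigr => s _.
  rewrite !mxE /RtoC /iC /=; apply/eqP; rewrite eq_complex /=.
  by apply/andP; split; apply/eqP; ring.
by rewrite cosP cosM sinP sinM subrr !mxE.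
Qed.

End Reflection.

Section Correlation.
Variable R : realType.

Lemma map_RtoC_mxM m n p (A : 'M[R]_(m, n)) (B : 'M[R]_(n, p)) :
  map_mx (@RtoC R) (A *m B) = map_mx (@RtoC R) A *m map_mx (@RtoC R) B.
Proof. exact: (map_mxM (real_complex R)). Qed.

Variables (n T : nat) (Z : 'M[R]_(n, T)).

Lemma Fstar_dft : Fstar Z = map_mx (@RtoC R) (Ztilde Z) *m dft_mx R T.
Proof. by apply/matrixP => i k; rewrite !mxE; apply: eq_bigr => t _; rewrite !mxE. Qed.

Lemma Rstar_hartley :
  Rstar Z = (Ztilde Z *m hartley_mx R T) *m (Ztilde Z *m hartley_mx R T)^T.
Proof.
by rewrite /Rstar trmx_mul mulmxA -(mulmxA _ (hartley_mx R T)) hartley_mx_orthogonal mulmx1.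
Qed.

Lemma Fstar_Khalf : (RtoC (Num.sqrt T%:R))^-1 *: (Fstar Z *m Khalf R T) =
  map_mx (@RtoC R) (Ztilde Z *m hartley_mx R T).
Proof.
rewrite Fstar_dft -mulmxA dft_Khalf -map_RtoC_mxM /hartley_mx -scalemxAr.
by rewrite (map_mxZ (real_complex R)) fmorphV.
Qed.

Lemma rank_Ztilde_hartley :
  (\rank (Ztilde Z *m hartley_mx R T) <= #|[set k | col k (Fstar Z) != 0%R]|)%N.
Proof.
rewrite -scalemxAr (leq_trans (mxrankS (scalemx_sub _ (submx_refl _)))) //.
apply: leq_trans (mxrank_le_nonzero_cols _) (subset_leq_card _).
apply/subsetP => k; rewrite !inE; apply: contra => /eqP/colP F0; apply/eqP/colP => i.
have Fik := F0 i; rewrite [RHS]mxE mxE Fstar_dft dft_mul_entry in Fik.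
case: Fik => YC /eqP; rewrite oppr_eq0 => /eqP YS.
by rewrite [RHS]mxE mxE /cas_mx mulmxDr mxE YC YS addr0.
Qed.
End Correlation.

Theorem mainTheorem3 (R : realType) (n T d0 : nat) (Z : 'M[R]_(n, T)) :
  (forall i : 'I_n, 0 < sigma2 Z i) ->
  (#|[set k : 'I_T | col k (Fstar Z) != 0%R]| <= d0)%N ->
  (\rank (Rstar Z) <= 2 * d0)%N /\
  forall X : 'M[R]_(n, \rank (Rstar Z)),
    is_ASE (Rstar Z) X ->
    exists W : 'M[R]_T,
      W^T *m W = 1%:M /\
      map_mx (@RtoC R) (padcols T X)
        = ((RtoC (Num.sqrt (T%:R)))^-1) *: (Fstar Z *m Khalf R T *m map_mx (@RtoC R) W).
Proof.
move=> _ Fd0; split.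
  rewrite Rstar_hartley (leq_trans (mxrankM_maxl _ _)) // (leq_trans (rank_Ztilde_hartley Z)) //.
  by rewrite (leq_trans Fd0) // leq_pmull.
move=> X /(ASE_gram_factor (Rstar_hartley Z)) [V [VV BXV]].
have [W [WW VW]] := orthonormal_completion VV.
exists W; split => //.
by rewrite scalemxAl Fstar_Khalf -map_RtoC_mxM BXV -mulmxA VW padcols_pid.
Qed.
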